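(* Assume the standing setup below and let $\rho\ge 0$. Suppose $\mathcal{G}$ is a quasi-concave hill (QCH) and $\mathbf{x}\in\mathcal{NE}_\rho$. Then $u_i(\mathbf{x}_i)=u_j(\mathbf{x}_j)$ for all $i,j\in\mathrm{supp}(\mathbf{x})$.
   Context: Standing setup: $\mathcal{G}=(\mathcal{V},\mathcal{E})$ is a finite, connected, undirected graph; $\mathcal{N}^i$ denotes the set of neighbours of node $i$. For $\rho\ge0$, $\mathcal{S}_\rho=\{\mathbf{x}\in\mathbb{R}^{|\mathcal{V}|}:\mathbf{x}\ge 0,\ \sum_{i\in\mathcal{V}}\mathbf{x}_i=\rho\}$, and $\mathrm{supp}(\mathbf{x})=\{i:\mathbf{x}_i\neq 0\}$. For each node $i$, $p_i:[0,\infty)\to\mathbb{R}$ is twice continuously differentiable and strictly concave, and $u_i:=p_i'$ (right derivative at $0$), so each $u_i$ is strictly decreasing. The maximum payoff density parameter (MPDP) of node $i$ is $\mathbf{a}_i:=u_i(0)$. The set of Nash equilibria is $\mathcal{NE}_\rho=\{\mathbf{x}\in\mathcal{S}_\rho: u_i(\mathbf{x}_i)\ge u_j(\mathbf{x}_j)\ \forall j\in\mathcal{N}^i,\ \forall i\in\mathrm{supp}(\mathbf{x})\}$. A path $\pi(1),\dots,\pi(n)$ in $\mathcal{G}$ (distinct nodes, consecutive ones adjacent) is a path with quasi-concave MPDP's if for all $1\le k\le m\le l\le n$, $\mathbf{a}_{\pi(m)}\ge\min\{\mathbf{a}_{\pi(k)},\mathbf{a}_{\pi(l)}\}$. $\mathcal{G}$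 is a quasi-concave hill (QCH) if between every two distinct nodes there exists a path with quasi-concave MPDP's. *)

From HB Require Import structures.
From mathcomp Require Import all_boot all_order all_algebra.
From mathcomp Require Import all_classical all_reals all_analysis.
Set Implicit Arguments. Unset Strict Implicit. Unset Printing Implicit Defensive.
Import Order.TTheory GRing.Theory Num.Theory.
Import numFieldNormedType.Exports.
Local Open Scope classical_set_scope.
Local Open Scope ring_scope.

Definition undirected_connected_graph (T : finType) (adj : rel T) : Prop :=
  symmetric adj /\ irreflexive adj /\ (forall i j : T, connect adj i j).

(* A path pi(1),...,pi(n) is represented as x :: p, with x = pi(1):
   distinct nodes, consecutive ones adjacent. *)
Definition is_graph_path (T : finType) (adj : rel T) (x : T) (p : seq T) : Prop :=
  uniq (x :: p) /\ path adj x p.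

Definition quasi_concave_path (R : realType) (T : finType) (a : T -> R)
    (x : T) (p : seq T) : Prop :=
  forall k m l : nat, (k <= m)%N -> (m <= l)%N -> (l < size (x :: p))%N ->
    Num.min (a (nth x (x :: p) k)) (a (nth x (x :: p) l)) <= a (nth x (x :: p) m).

Definition QCH (R : realType) (T : finType) (adj : rel T) (a : T -> R) : Prop :=
  forall i j : T, i != j ->
    exists p : seq T, [/\ is_graph_path adj i p, last i p = j &
                          quasi_concave_path a i p].

Definition right_derivative (R : realType) (f : R -> R) (x0 l : R) : Prop :=
  (fun h : R => h^-1 * (f (x0 + h) - f x0)) @ 0^'+ --> l.

(* f : [0,oo) -> R is twice continuously differentiable, with first derivative
   u (one-sided at 0): f' = u and u' = u2 on (0,oo), right derivatives at 0,
   and u2 continuous on [0,oo). *)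
Definition C2_on_nonneg_with_deriv (R : realType) (f u : R -> R) : Prop :=
  exists u2 : R -> R,
    [/\ forall x : R, 0 < x -> is_derive x 1 f (u x) /\ is_derive x 1 u (u2 x),
        right_derivative f 0 (u 0),
        right_derivative u 0 (u2 0) &
        {within [set x : R | 0 <= x], continuous u2}].

Definition strictly_concave_nonneg (R : realType) (f : R -> R) : Prop :=
  forall x y t : R, 0 <= x -> 0 <= y -> x != y -> 0 < t -> t < 1 ->
    t * f x + (1 - t) * f y < f (t * x + (1 - t) * y).

Definition simplex (R : realType) (T : finType) (rho : R) (x : T -> R) : Prop :=
  (forall i, 0 <= x i) /\ \sum_(i : T) x i = rho.

Definition supp (R : realType) (T : finType) (x : T -> R) : {set T} :=
  [set i | x i != 0].

Definition NE (R : realType) (T : finType) (adj : rel T) (u : T -> R -> R)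
    (rho : R) (x : T -> R) : Prop :=
  simplex rho x /\
  forall i, i \in supp x -> forall j, adj i j -> u j (x j) <= u i (x i).

From HB Require Import structures.
From mathcomp Require Import all_boot all_order all_algebra.
From mathcomp Require Import all_classical all_reals all_analysis.
From mathcomp Require Import ring lra.
Import Order.TTheory GRing.Theory Num.Theory.
Import numFieldNormedType.Exports.
Local Open Scope classical_set_scope.
Local Open Scope ring_scope.

(* Two independent facts are combined.
   (1) Analysis: for a strictly concave payoff p with marginal payoff u = p',
       u y < u 0 for every y > 0.  Chord slopes of a strictly concave function
       strictly decrease, and a right derivative is squeezed between the
       slopes of the chords to its right and to its left.
   (2) Combinatorics: at a Nash equilibrium x, whenever an edge joins a node k
       of the support to a node l outside it, the MPDP drops strictly:
       a_l = u_l(0) <= u_k(x_k) < u_k(0) = a_k.  Along a path with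
       quasi-concave MPDP's joining two support nodes, a maximal block of
       non-support nodes would be entered by a strict descent and left by a
       strict ascent, which quasi-concavity forbids; so the whole path lies in
       the support.
   Finally, along an edge inside the support the equilibrium conditions hold
   in both directions, so u_k(x_k) is constant along the path, and a QCH
   provides such a path between any two support nodes. *)

Section ConcaveMarginals.
Context {R : realType}.

Lemma concave_chord_slopes {f : R -> R} {a b c : R} :
  strictly_concave_nonneg f -> 0 <= a -> a < b -> b < c ->
  (f c - f b) * (b - a) < (f b - f a) * (c - b).
Proof.
move=> conc a_ge0 ab bc.
have ca : 0 < c - a by lra.
set t := (c - b) / (c - a).
have t_gt0 : 0 < t by rewrite divr_gt0 //; lra.
have t_lt1 : t < 1 by rewrite ltr_pdivrMr //; lra.
have := conc a c t a_ge0 ltac:(lra) ltac:(apply/eqP => E; lra) t_gt0 t_lt1.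
have -> : t * a + (1 - t) * c = b by rewrite /t; field; apply/eqP => E; lra.
have -> : 1 - t = (b - a) / (c - a) by rewrite /t; field; apply/eqP => E; lra.
rewrite /t => Hconc.
have : (c - b) * f a + (b - a) * f c < (c - a) * f b.
  move: Hconc; rewrite -(ltr_pM2l ca) mulrDr !mulrA.
  by rewrite !(mulrC (c - a)) !mulrK ?unitfE //; apply/eqP => E; lra.
nra.
Qed.

Lemma right_derivative_of_derive {f : R -> R} {y l : R} :
  is_derive y 1 f l -> right_derivative f y l.
Proof.
move=> [df dv].
have two_sided : (fun h : R => h^-1 *: ((f \o shift y) (h *: 1) - f y)) @ 0^'
                   --> l.
  by rewrite -dv; exact: df.
have right_sub : (0 : R)^'+ `=>` (0 : R)^'.
  by move=> P [e e0 He]; exists e => // z zb z0; apply: He => //; rewrite gt_eqF.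
apply: cvg_trans (cvg_trans (cvg_app _ right_sub) two_sided).
apply: near_eq_cvg; near=> h.
have -> : h *: (1 : R^o) = h by rewrite -[RHS]mulr1.
by rewrite /= (addrC h).
Unshelve. all: by end_near.
Qed.

Lemma chord_le_right_derivative {f : R -> R} {a b l : R} :
  strictly_concave_nonneg f -> 0 <= a -> a < b -> right_derivative f a l ->
  (f b - f a) / (b - a) <= l.
Proof.
move=> conc a_ge0 ab dl.
rewrite -(cvg_lim _ dl); last exact: Rhausdorff.
apply: limr_ge; first exact: (cvgP _ dl).
near=> h.
have h_gt0 : 0 < h by near: h; exact: nbhs_right_gt.
have hba : h < b - a by near: h; apply: nbhs_right_lt; lra.
have slopes : (f b - f (a + h)) * (a + h - a) < (f (a + h) - f a) * (b - (a + h)).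
  by apply: concave_chord_slopes; rewrite // ?ltrDl //; lra.
rewrite ler_pdivrMr; last lra.
rewrite -(ler_pM2l h_gt0) mulrA mulrA mulfV ?gt_eqF // mul1r.
rewrite (_ : a + h - a = h) in slopes; last by ring.
nra.
Unshelve. all: by end_near.
Qed.

Lemma right_derivative_le_chord {f : R -> R} {z y l : R} :
  strictly_concave_nonneg f -> 0 <= z -> z < y -> right_derivative f y l ->
  l <= (f y - f z) / (y - z).
Proof.
move=> conc z_ge0 zy dl.
rewrite -(cvg_lim _ dl); last exact: Rhausdorff.
apply: limr_le; first exact: (cvgP _ dl).
near=> h.
have h_gt0 : 0 < h by near: h; exact: nbhs_right_gt.
have slopes : (f (y + h) - f y) * (y - z) < (f y - f z) * (y + h - y).
  by apply: concave_chord_slopes; rewrite // ltrDl.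
rewrite ler_pdivlMr; last lra.
rewrite -(ler_pM2l h_gt0) mulrA mulrA mulfV ?gt_eqF // mul1r.
rewrite (_ : y + h - y = h) in slopes; last by ring.
nra.
Unshelve. all: by end_near.
Qed.

Lemma marginal_lt_mpdp {f u : R -> R} {y : R} :
  C2_on_nonneg_with_deriv f u -> strictly_concave_nonneg f -> 0 < y ->
  u y < u 0.
Proof.
case=> u2 [deriv du0 _ _] conc y_gt0.
have duy := right_derivative_of_derive (deriv y y_gt0).1.
set z := y / 2.
have z_gt0 : 0 < z by rewrite divr_gt0.
have zy : z < y by rewrite /z; lra.
have le_u0 := chord_le_right_derivative conc (lexx 0) z_gt0 du0.
have ge_uy := right_derivative_le_chord conc (ltW z_gt0) zy duy.
have slopes := concave_chord_slopes conc (lexx 0) z_gt0 zy.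
have yz : y - z = z by rewrite /z; field.
rewrite yz subr0 in ge_uy le_u0 slopes.
have : (f y - f z) / z < (f z - f 0) / z by rewrite ltr_pM2r ?invr_gt0 //; nra.
lra.
Qed.

End ConcaveMarginals.

Section QuasiConcaveSequences.
Context {R : realType}.

(* Let b be quasi-concave on the indices [0, n) and P a property of the
   indices holding at both ends.  If b drops strictly whenever one leaves P
   and rises strictly whenever one re-enters P, then P holds everywhere:
   a maximal block of indices outside P would contradict quasi-concavity. *)
Lemma quasi_concave_no_gap (b : nat -> R) (P : pred nat) (n : nat) :
  (forall k m l, (k <= m)%N -> (m <= l)%N -> (l < n)%N ->
     Num.min (b k) (b l) <= b m) ->
  P 0%N -> P n.-1 ->
  (forall m, (m.+1 < n)%N -> P m -> ~~ P m.+1 -> b m.+1 < b m) ->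
  (forall m, (m.+1 < n)%N -> ~~ P m -> P m.+1 -> b m < b m.+1) ->
  forall m, (m < n)%N -> P m.
Proof.
move=> qc P0 Plast leave enter m mn; apply/idPn => notPm.
pose gap k := (k < n)%N && ~~ P k.
have ex_gap : exists k, gap k by exists m; rewrite /gap mn.
have gap_le k : gap k -> (k <= n)%N by case/andP => /ltnW.
case: (ex_minnP ex_gap) => t /andP [tn notPt] t_first.
case: (ex_maxnP ex_gap gap_le) => t' /andP [t'n notPt'] t'_last.
have tt' : (t <= t')%N by apply: t'_last; rewrite /gap tn notPt.
have t_gt0 : (0 < t)%N by case: t {tn t_first tt'} notPt => //; rewrite P0.
have t'_lt : (t'.+1 < n)%N.
  rewrite ltn_neqAle t'n andbT; apply/eqP => E.
  by move: Plast; rewrite -E /= (negPf notPt').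
have Pt_pred : P t.-1.
  apply/idPn => H; have := t_first t.-1.
  by rewrite /gap H (leq_ltn_trans (leq_pred t) tn) leqNgt ltn_predL t_gt0 => /(_ isT).
have Pt'_succ : P t'.+1.
  by apply/idPn => H; have := t'_last t'.+1; rewrite /gap H t'_lt ltnn => /(_ isT).
have drop : b t < b t.-1 by have := leave t.-1; rewrite prednK //; apply.
have rise : b t' < b t'.+1 by exact: enter.
have q1 := qc t.-1 t t'.+1 (leq_pred t) (leqW tt') t'_lt.
have q2 := qc t.-1 t' t'.+1 (leq_trans (leq_pred t) tt') (leqnSn t') t'_lt.
rewrite !ge_min in q1 q2.
case/orP: q1 => h1; first by have := lt_le_trans drop h1; rewrite ltxx.
case/orP: q2 => h2; last by have := lt_le_trans rise h2; rewrite ltxx.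
by have := lt_le_trans drop (le_trans h2 (le_trans (ltW rise) h1)); rewrite ltxx.
Qed.

End QuasiConcaveSequences.

Lemma path_value_const {T : eqType} {V : Type} {e : rel T} {S : pred T}
    (g : T -> V) {x : T} {p : seq T} :
  {in S &, forall a b, e a b -> g a = g b} ->
  path e x p -> all S (x :: p) -> g (last x p) = g x.
Proof.
move=> step; elim: p x => [|y p IH] x //= /andP [exy pth] /and3P [Sx Sy Sp].
by rewrite IH /= ?Sy ?Sp // (step x y).
Qed.

Section NashEquilibria.
Context {R : realType} {T : finType} {adj : rel T} {u : T -> R -> R}.
Context {rho : R} {x : T -> R}.
Hypothesis adj_sym : symmetric adj.
Hypothesis eq_x : NE adj u rho x.

Lemma mpdp_drop_off_support (k l : T) :
  (forall y, 0 < y -> u k y < u k 0) ->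
  k \in supp x -> l \notin supp x -> adj k l -> u l 0 < u k 0.
Proof.
move=> marg kS lnS kl.
case: eq_x => [[x_ge0 _] best].
have xl0 : x l = 0 by move: lnS; rewrite inE negbK => /eqP.
have xk_gt0 : 0 < x k by move: kS; rewrite inE lt_def x_ge0 andbT.
have := best k kS l kl; rewrite xl0 => ul_le.
exact: le_lt_trans ul_le (marg _ xk_gt0).
Qed.

Lemma marginal_eq_in_support : {in supp x &, forall k l, adj k l ->
  u k (x k) = u l (x l)}.
Proof.
case: eq_x => _ best k l kS lS kl.
by apply/le_anti/andP; split; apply: best; rewrite // adj_sym.
Qed.

End NashEquilibria.

Theorem mainTheorem2 (R : realType) (T : finType) (adj : rel T)
    (p u : T -> R -> R) (rho : R) (x : T -> R) :
  undirected_connected_graph adj ->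
  (forall i : T, C2_on_nonneg_with_deriv (p i) (u i)) ->
  (forall i : T, strictly_concave_nonneg (p i)) ->
  0 <= rho ->
  QCH adj (fun i => u i 0) ->
  NE adj u rho x ->
  forall i j : T, i \in supp x -> j \in supp x -> u i (x i) = u j (x j).
Proof.
move=> [adj_sym _] C2 conc _ qch eq_x i j iS.
have [<-|ij] := eqVneq i j; first by [].
have [q [[_ pth] <- qc]] := qch i j ij; move=> lastS.
have marg k y : 0 < y -> u k y < u k 0 := marginal_lt_mpdp (C2 k) (conc k).
have drop k l := mpdp_drop_off_support eq_x k l (marg k).
pose N m := nth i (i :: q) m.
have step m : (m.+1 < size (i :: q))%N -> adj (N m) (N m.+1) by move/(pathP i pth).
have in_supp : all (mem (supp x)) (i :: q).
  apply/(all_nthP i).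
  apply: (quasi_concave_no_gap (fun m => u (N m) 0) (fun m => N m \in supp x)).
  - exact: qc.
  - exact: iS.
  - by rewrite /N nth_last.
  - by move=> k kn Pk nPk; exact: drop _ _ Pk nPk (step _ kn).
  - by move=> k kn nPk Pk; apply: drop _ _ Pk nPk _; rewrite adj_sym step.
have const_on_path := marginal_eq_in_support adj_sym eq_x.
exact: esym (path_value_const (fun k => u k (x k)) const_on_path pth in_supp).
Qed.
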